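(* Let $K$ be a field, let $\Sigma$ be a rational pointed fan in $\mathbb{R}^d$, let $\mathcal{M}_\Sigma$ be a monoidal complex supported by $\Sigma$, and let $C_1,\dots,C_j,D\in\Sigma$. Then in $K[\mathcal{M}_\Sigma]$: (i) $\mathfrak p_{C_1\cap\dots\cap C_j}=\mathfrak p_{C_1}+\dots+\mathfrak p_{C_j}$; (ii) $\mathfrak p_D+\bigcap_{i=1}^t\mathfrak p_{C_i}=\bigcap_{i=1}^t(\mathfrak p_D+\mathfrak p_{C_i})$ (for any $t\le j$ cones $C_1,\dots,C_t$).
   Context: A rational pointed fan $\Sigma$ in $\mathbb{R}^d$ is a finite collection of rational pointed polyhedral cones closed under taking faces, such that the intersection of two cones of $\Sigma$ is a common face of both. A monoidal complex supported by $\Sigma$ is a set $\mathcal{M}_\Sigma=\{M_C\subseteq\mathbb{Z}^d : C\in\Sigma\}$ of affine monoids such that the cone generated by $M_C$ is $C$ and $M_{C'}=M_C\cap C'$ whenever $C'\subseteq C$ are in $\Sigma$. With $|\mathcal{M}_\Sigma|=\bigcup_C M_C$, the toric face ring $K[\mathcal{M}_\Sigma]$ has $K$-basis $\{x^a: a\in|\mathcal{M}_\Sigma|\}$ with $x^ax^b=x^{a+b}$ if $a,b$ lie in a common $M_C$ and $0$ otherwise. For $C\in\Sigma$, $\mathfrak p_C$ is the ideal generated by the $x^a$ with $a\in|\mathcal{M}_\Sigma|\setminus M_C$. *)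

From HB Require Import structures.
From mathcomp Require Import all_boot all_order all_algebra.
From mathcomp Require Import boolp classical_sets cardinality fsbigop reals.
Set Implicit Arguments. Unset Strict Implicit. Unset Printing Implicit Defensive.
Import Order.TTheory GRing.Theory Num.Theory.
Local Open Scope classical_set_scope.
Local Open Scope ring_scope.

Section Geometry.
Variables (R : realType) (d : nat).

Definition vecR := 'rV[R]_d.
Definition vecZ := 'rV[int]_d.
Definition toR (a : vecZ) : vecR := map_mx (fun z : int => z%:~R) a.

Definition dotR (u x : vecR) : R := \sum_(i < d) u 0 i * x 0 i.

Definition cone_of (A : set vecR) : set vecR :=
  [set x | exists s : seq vecR, (forall v, v \in s -> A v) /\
     exists c : 'I_(size s) -> R, (forall i, 0 <= c i) /\
       x = \sum_(i < size s) c i *: s`_i].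

Definition rational_polyhedral_cone (C : set vecR) : Prop :=
  exists s : seq vecZ, C = cone_of [set v | v \in map toR s].

Definition pointed (C : set vecR) : Prop :=
  forall x, C x -> C (- x) -> x = 0.

Definition face_of (F C : set vecR) : Prop :=
  exists u : vecR, (forall x, C x -> 0 <= dotR u x) /\
    F = C `&` [set x | dotR u x = 0].

Definition rational_pointed_fan (Sigma : set (set vecR)) : Prop :=
  [/\ finite_set Sigma,
      (forall C, Sigma C -> rational_polyhedral_cone C /\ pointed C),
      (forall C F, Sigma C -> face_of F C -> Sigma F) &
      (forall C C', Sigma C -> Sigma C' ->
         face_of (C `&` C') C /\ face_of (C `&` C') C')].

Definition affine_monoid (M : set vecZ) : Prop :=
  exists s : seq vecZ, M = [set a | exists c : 'I_(size s) -> nat,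
                                     a = \sum_(i < size s) s`_i *+ c i].

Definition monoidal_complex (Sigma : set (set vecR)) (M : set vecR -> set vecZ)
  : Prop :=
  [/\ (forall C, Sigma C -> affine_monoid (M C)),
      (forall C, Sigma C -> cone_of (toR @` M C) = C) &
      (forall C C', Sigma C -> Sigma C' -> C' `<=` C ->
         M C' = M C `&` [set a | C' (toR a)])].

Definition support (Sigma : set (set vecR)) (M : set vecR -> set vecZ) : set vecZ :=
  \bigcup_(C in Sigma) M C.

End Geometry.

Section ToricFaceRing.
Variables (R : realType) (d : nat) (K : fieldType).
Variables (Sigma : set (set (vecR R d))) (M : set (vecR R d) -> set (vecZ d)).

(* Elements of K[M_Sigma] are represented by their coefficient functions
   a |-> coefficient of x^a: finitely supported, support inside |M_Sigma|. *)
Definition elt := vecZ d -> K.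

Definition tfr (f : elt) : Prop :=
  finite_set [set a | f a != 0] /\ (forall a, f a != 0 -> support Sigma M a).

Definition tfr_add (f g : elt) : elt := fun a => f a + g a.
Definition tfr_opp (f : elt) : elt := fun a => - f a.
Definition tfr_zero : elt := fun _ => 0.

Definition monom (a : vecZ d) : elt := fun b => if b == a then 1 else 0.

Definition common_cone (a b : vecZ d) : Prop :=
  exists C, Sigma C /\ M C a /\ M C b.

(* x^a x^b = x^(a+b) if a, b lie in a common M_C, and 0 otherwise,
   extended bilinearly *)
Definition tfr_mul (f g : elt) : elt := fun c =>
  \sum_(p \in [set p : vecZ d * vecZ d | [/\ f p.1 != 0, g p.2 != 0,
                                           p.1 + p.2 = c & common_cone p.1 p.2]])
     f p.1 * g p.2.

Definition is_ideal (I : set elt) : Prop :=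
  [/\ I `<=` tfr, I tfr_zero,
      (forall f g, I f -> I g -> I (tfr_add f g)),
      (forall f, I f -> I (tfr_opp f)) &
      (forall r f, tfr r -> I f -> I (tfr_mul r f))].

Definition ideal_gen (G : set elt) : set elt :=
  [set f | forall I, is_ideal I -> G `<=` I -> I f].

Definition ideal_add (I J : set elt) : set elt :=
  [set h | exists f g, I f /\ J g /\ h = tfr_add f g].

Definition ideal_zero : set elt := [set tfr_zero].

Definition prime_p (C : set (vecR R d)) : set elt :=
  ideal_gen [set monom a | a in support Sigma M `\` M C].

End ToricFaceRing.

From Pilot Require Import Defs.
From HB Require Import structures.
From mathcomp Require Import all_boot all_order all_algebra.
From mathcomp Require Import boolp classical_sets cardinality fsbigop reals.
Import Order.TTheory GRing.Theory Num.Theory.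
Set Implicit Arguments. Unset Strict Implicit. Unset Printing Implicit Defensive.
Local Open Scope classical_set_scope.
Local Open Scope ring_scope.

(* Write V(S) = vanishing S for the elements of K[M_Sigma] whose
   coefficients vanish on S.  Then p_C = V(M_C): the generators of p_C lie in
   V(M_C), every element of V(M_C) is a K-combination of them, and V(M_C) is
   an ideal because M_C is a face of every M_C': if a, b are in M_C' and a + b is in M_C, then b is in
   M_C, since a linear form cutting out the face C' /\ C of C' is nonnegative
   on a and b and vanishes on a + b.  Sums and intersections of such ideals are
   computed on the exponents, V(S) + V(T) = V(S /\ T) and
   /\_i V(S_i) = V(\/_i S_i), and M_(C_1 /\ ... /\ C_j) is the intersection
   of the M_(C_i); so (i) holds, and (ii) is the distributivity of
   intersection over union. *)

Section Cones.
Variables (R : realType) (d : nat).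

Lemma toRD (a b : vecZ d) : toR R (a + b) = toR R a + toR R b.
Proof. by apply/matrixP => i k; rewrite !mxE intrD. Qed.

Lemma dotRDr (u x y : vecR R d) : dotR u (x + y) = dotR u x + dotR u y.
Proof. by rewrite /dotR -big_split; apply: eq_bigr => i _; rewrite mxE mulrDr. Qed.

Lemma face_summand (F C : set (vecR R d)) x y :
  face_of F C -> C x -> C y -> F (x + y) -> F y.
Proof.
move=> [u [u_ge0 ->]] Cx Cy [_ /=]; rewrite dotRDr => /eqP.
by rewrite paddr_eq0 ?u_ge0 // => /andP[_ /eqP uy0].
Qed.

End Cones.

Lemma affine_monoid0 d (S : set (vecZ d)) : affine_monoid S -> S 0.
Proof. by move=> [s ->]; exists (fun _ => 0%N); rewrite big1 // => i _; rewrite mulr0n. Qed.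

Lemma affine_monoidD d (S : set (vecZ d)) a b :
  affine_monoid S -> S a -> S b -> S (a + b).
Proof.
move=> [s ->] [ca ->] [cb ->]; exists (fun i => (ca i + cb i)%N).
by rewrite -big_split; apply: eq_bigr => i _; rewrite mulrnDr.
Qed.

Lemma set_seq_cons (T : eqType) (x : T) (s : seq T) :
  [set` x :: s] = x |` [set` s].
Proof.
apply/predeqP => y; rewrite /= inE.
by split=> [/orP[/eqP|]|[->|->]]; [left|right|rewrite eqxx|rewrite orbT].
Qed.

Section MonoidalComplex.
Variables (R : realType) (d : nat).
Variables (Sigma : set (set (vecR R d))) (M : set (vecR R d) -> set (vecZ d)).
Hypotheses (fan : rational_pointed_fan Sigma) (mc : monoidal_complex Sigma M).

Lemma monoid_sub_cone C a : Sigma C -> M C a -> C (toR R a).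
Proof.
case: mc => _ cone _ SC Ma; rewrite -(cone C SC).
exists [:: toR R a]; split; first by move=> v; rewrite inE => /eqP ->; exists a.
by exists (fun _ => 1); split=> [_|]; rewrite ?ler01 // big_ord1 scale1r.
Qed.

Lemma mem_monoid_summand C C' a b : Sigma C -> Sigma C' ->
  M C' a -> M C' b -> M C (a + b) -> M C b.
Proof.
move=> SC SC' Ma Mb Mab; case: (fan) => _ _ face_closed face_meet.
case: (mc) => monoid _ restrict.
have [faceC' _] := face_meet C' C SC' SC.
have SF : Sigma (C' `&` C) by apply: face_closed faceC'.
have Fab : (C' `&` C) (toR R a + toR R b).
  rewrite -toRD; split; apply: monoid_sub_cone => //.
  exact: affine_monoidD (monoid C' SC') Ma Mb.
have Fb := face_summand faceC' (monoid_sub_cone SC' Ma) (monoid_sub_cone SC' Mb) Fab.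
have : M (C' `&` C) b by rewrite (restrict C') //; apply: subIsetl.
by rewrite (restrict C) // => -[].
Qed.

Lemma fan_bigcap_seq (I : eqType) (C : I -> set (vecR R d)) (s : seq I) :
  s != [::] -> (forall i, Sigma (C i)) -> Sigma (\bigcap_(i in [set` s]) C i).
Proof.
move=> + SC; elim: s => [//|x [|y s] IH] _.
  by rewrite set_cons1 bigcap_set1.
case: (fan) => _ _ face_closed face_meet.
rewrite set_seq_cons bigcap_setU1.
have [faceCx _] := face_meet (C x) _ (SC x) (IH isT).
exact: face_closed faceCx.
Qed.

Lemma monoid_bigcap (I : Type) (P : set I) (C : I -> set (vecR R d)) :
  P !=set0 -> (forall i, Sigma (C i)) -> Sigma (\bigcap_(i in P) C i) ->
  M (\bigcap_(i in P) C i) = \bigcap_(i in P) M (C i).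
Proof.
move=> [i0 Pi0] SC Scap; case: (mc) => _ _ restrict.
apply/seteqP; split => a.
  move=> Ma i Pi.
  by move: Ma; rewrite (restrict (C i)) // => [[]|]; last exact: bigcap_inf.
move=> Ma; rewrite (restrict (C i0)) //; last exact: bigcap_inf.
by split; [exact: Ma | move=> i Pi; exact: monoid_sub_cone (Ma i Pi)].
Qed.

End MonoidalComplex.

Section ToricFaceRing.
Variables (R : realType) (d : nat) (K : fieldType).
Variables (Sigma : set (set (vecR R d))) (M : set (vecR R d) -> set (vecZ d)).

Local Notation elt := (elt d K).
Local Notation tfr := (tfr Sigma M).
Local Notation tfr_mul := (tfr_mul Sigma M).

Definition vanishing (S : set (vecZ d)) : set elt :=
  [set f | tfr f /\ forall a, S a -> f a = 0].

Definition kmonom (k : K) (a : vecZ d) : elt := fun b => if b == a then k else 0.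

Lemma tfr_subsupp (f g : elt) :
  tfr f -> (forall a, g a != 0 -> f a != 0) -> tfr g.
Proof.
move=> [fin_f supp_f] gf; split; last by move=> a /gf /supp_f.
by apply: sub_finite_set fin_f => a /= /gf.
Qed.

Lemma tfr0 : tfr (@tfr_zero d K).
Proof.
split=> [|a]; rewrite /tfr_zero ?eqxx //.
by apply: (@sub_finite_set _ _ set0 _ (finite_set0 _)) => a //=.
Qed.

Lemma tfrD (f g : elt) : tfr f -> tfr g -> tfr (tfr_add f g).
Proof.
move=> [fin_f supp_f] [fin_g supp_g].
have fg_neq0 a : tfr_add f g a != 0 -> f a != 0 \/ g a != 0.
  by rewrite /tfr_add; have [->|] := eqVneq (f a) 0; [rewrite add0r; right | left].
split=> [|a /fg_neq0 [/supp_f|/supp_g] //].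
apply: (@sub_finite_set _ _ ([set a | f a != 0] `|` [set a | g a != 0])).
  by move=> a /fg_neq0.
by rewrite finite_setU.
Qed.

Lemma tfrN (f : elt) : tfr f -> tfr (tfr_opp f).
Proof. by move=> tf; apply: tfr_subsupp tf _ => a; rewrite /tfr_opp oppr_eq0. Qed.

Lemma tfr_kmonom k a : Defs.support Sigma M a -> tfr (kmonom k a).
Proof.
rewrite /kmonom => Sa; split=> [|b]; last by have [->|] := eqVneq b a; rewrite ?eqxx.
apply: (@sub_finite_set _ _ [set a]); last exact: finite_set1.
by move=> b /=; have [|] := eqVneq b a; rewrite ?eqxx.
Qed.

Lemma ideal_add_vanishing S T :
  ideal_add (vanishing S) (vanishing T) = vanishing (S `&` T).
Proof.
apply/seteqP; split.
  move=> _ [f [g [[tf Sf] [[tg Tg] ->]]]]; split; first exact: tfrD.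
  by move=> a [/Sf Sa /Tg Ta]; rewrite /tfr_add Sa Ta addr0.
move=> f [tf STf].
exists (fun a => if `[< S a >] then 0 else f a).
exists (fun a => if `[< S a >] then f a else 0).
split; [split|split; [split|]].
- by apply: tfr_subsupp tf _ => a; case: ifP; rewrite ?eqxx.
- by move=> a Sa; rewrite ifT //; apply/asboolP.
- by apply: tfr_subsupp tf _ => a; case: ifP; rewrite ?eqxx.
- by move=> a Ta; case: ifPn => // /asboolP Sa; exact: STf.
- by apply/funext => a; rewrite /tfr_add; case: ifP; rewrite ?add0r ?addr0.
Qed.

Lemma bigcap_vanishing (I : Type) (P : set I) (S : I -> set (vecZ d)) :
  P !=set0 -> \bigcap_(i in P) vanishing (S i) = vanishing (\bigcup_(i in P) S i).
Proof.
move=> [i0 Pi0]; apply/seteqP; split.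
  move=> f Vf; split=> [|a [i Pi]]; first by case: (Vf i0 Pi0).
  by case: (Vf i Pi) => _; apply.
by move=> f [tf Sf] i Pi; split=> // a Sia; apply: Sf; exists i.
Qed.

Lemma vanishing_setT : vanishing setT = @ideal_zero d K.
Proof.
apply/seteqP; split=> [f [_ f0]|_ ->]; last by split; [exact: tfr0|].
by apply/funext => a; exact: f0.
Qed.

Lemma foldr_ideal_add_vanishing (I : eqType) (J : I -> set elt)
    (S : I -> set (vecZ d)) (s : seq I) :
  (forall i, J i = vanishing (S i)) ->
  foldr (fun i acc => ideal_add (J i) acc) (@ideal_zero d K) s =
    vanishing (\bigcap_(i in [set` s]) S i).
Proof.
move=> JS; elim: s => [|x s IH] /=.
  by rewrite set_nil bigcap_set0 vanishing_setT.
by rewrite IH JS ideal_add_vanishing set_seq_cons bigcap_setU1.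
Qed.

Lemma tfr_mul_neq0 (f g : elt) c : tfr_mul f g c != 0 ->
  exists2 p : vecZ d * vecZ d, p.1 + p.2 = c &
    [/\ f p.1 != 0, g p.2 != 0 & common_cone Sigma M p.1 p.2].
Proof.
apply: contraNP => no_pair; rewrite /tfr_mul fsbig1 //.
by move=> [a b] /= [fa gb ab_c ab]; case: no_pair; exists (a, b).
Qed.

Lemma tfr_mul_kmonom k l a b : common_cone Sigma M a b ->
  tfr_mul (kmonom k a) (kmonom l b) = kmonom (k * l) (a + b).
Proof.
move=> ab; apply/funext => c; rewrite /tfr_mul.
have pairE (p : vecZ d * vecZ d) :
    kmonom k a p.1 != 0 -> kmonom l b p.2 != 0 -> p = (a, b).
  case: p => x y; rewrite /kmonom /=.
  by have [->|] := eqVneq x a; have [->|] := eqVneq y b; rewrite ?eqxx.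
have [->|c_ab] := eqVneq c (a + b); last first.
  rewrite /kmonom (negbTE c_ab) fsbig1 // => p [p1 p2 pc _].
  by move: c_ab; rewrite -pc (pairE p p1 p2) eqxx.
rewrite (fsbig_widen _ [set (a, b)]) ?fsbig_set1 /kmonom ?eqxx //.
  by move=> p [p1 p2 _ _]; exact: pairE.
move=> _ [-> not_ab] /=; rewrite !eqxx; apply/eqP.
apply: contra_notP not_ab => /negP; rewrite mulf_eq0 negb_or => /andP[k0 l0].
by split; rewrite /= ?eqxx.
Qed.

Hypotheses (fan : rational_pointed_fan Sigma) (mc : monoidal_complex Sigma M).

Lemma tfrM (f g : elt) : tfr f -> tfr g -> tfr (tfr_mul f g).
Proof.
move=> [fin_f _] [fin_g _]; split.
  apply: (@sub_finite_set _ _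
    ((fun p => p.1 + p.2) @` ([set a | f a != 0] `*` [set b | g b != 0]))).
    by move=> c /tfr_mul_neq0 [p <- [fp gp _]]; exists p.
  exact/finite_image/finite_setX.
move=> c /tfr_mul_neq0 [p <- [_ _ [C [SC [Mp1 Mp2]]]]].
by exists C => //; apply: affine_monoidD Mp1 Mp2; case: mc => + _ _; apply.
Qed.

Lemma vanishing_ideal C : Sigma C -> is_ideal Sigma M (vanishing (M C)).
Proof.
move=> SC; split.
- by move=> f [].
- by split; [exact: tfr0|].
- move=> f g [tf f0] [tg g0]; split; first exact: tfrD.
  by move=> a Ma; rewrite /tfr_add f0 // g0 // addr0.
- move=> f [tf f0]; split; first exact: tfrN.
  by move=> a Ma; rewrite /tfr_opp f0 // oppr0.
- move=> r f tr [tf f0]; split; first exact: tfrM.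
  move=> c Mc; apply/eqP; apply: contraT.
  move=> /tfr_mul_neq0 [p pc [_ fp [C' [SC' [Mp1 Mp2]]]]].
  suff /f0 fp0 : M C p.2 by rewrite fp0 eqxx in fp.
  by apply: (mem_monoid_summand fan mc SC SC' Mp1 Mp2); rewrite pc.
Qed.

Lemma ideal_kmonom (I : set elt) k a : is_ideal Sigma M I ->
  Defs.support Sigma M a -> I (monom K a) -> I (kmonom k a).
Proof.
move=> [_ _ _ _ Imul] [C SC Ma] Ia.
have M0 : M C 0 by apply: affine_monoid0; case: mc => + _ _; apply.
have -> : kmonom k a = tfr_mul (kmonom k 0) (monom K a).
  by rewrite [monom K a]/(kmonom 1 a) tfr_mul_kmonom ?mulr1 ?add0r //; exists C.
by apply: Imul Ia; apply: tfr_kmonom; exists C.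
Qed.

Lemma ideal_monom_span (I : set elt) (g : elt) : is_ideal Sigma M I -> tfr g ->
  (forall a, g a != 0 -> I (monom K a)) -> I g.
Proof.
move=> II tg.
have [s supp_s] : exists s : seq (vecZ d), [set a | g a != 0] = [set` s].
  by apply/finite_seqP; case: tg.
have : forall a, g a != 0 -> a \in s.
  by move=> a ga; have : [set a | g a != 0] a by []; rewrite supp_s.
have [_ I0 Iadd _ _] := II.
elim: s {supp_s} g tg => [|x s IH] g tg gs gI.
  have -> // : g = @tfr_zero d K.
  by apply/funext => a; apply/eqP; apply: contraT => /gs.
have [gx0|gx] := eqVneq (g x) 0.
  apply: IH => // a ga; move: (gs a ga); rewrite inE => /orP[/eqP ax|//].
  by rewrite ax gx0 eqxx in ga.
pose g' : elt := fun b => if b == x then 0 else g b.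
have -> : g = tfr_add g' (kmonom (g x) x).
  apply/funext => b; rewrite /tfr_add /g' /kmonom.
  by case: eqVneq => [->|]; rewrite ?add0r ?addr0.
apply: Iadd; last by apply: ideal_kmonom II _ (gI x gx); case: tg => _; apply.
apply: IH.
- by apply: tfr_subsupp tg _ => b; rewrite /g'; case: ifP; rewrite ?eqxx.
- move=> b; rewrite /g'; have [_|bx /gs] := eqVneq b x; first by rewrite eqxx.
  by rewrite inE (negbTE bx).
- by move=> b; rewrite /g'; case: ifP; rewrite ?eqxx // => _ /gI.
Qed.

Lemma prime_p_vanishing C : Sigma C -> @prime_p R d K Sigma M C = vanishing (M C).
Proof.
move=> SC; apply/seteqP; split=> f.
  apply; first exact: vanishing_ideal.
  move=> _ [a [Sa Ma] <-]; split; first exact: (tfr_kmonom 1).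
  by move=> b Mb; rewrite /monom; case: eqVneq => // ba; rewrite ba in Mb.
move=> [tf f0] I II gensI; apply: ideal_monom_span => // a fa.
apply: gensI; exists a => //; split; first by case: tf => _; apply.
by move=> Ma; rewrite f0 ?eqxx in fa.
Qed.

End ToricFaceRing.

Theorem lemma2p3 (K : fieldType) (R : realType) (d : nat)
    (Sigma : set (set (vecR R d))) (M : set (vecR R d) -> set (vecZ d))
    (j : nat) (C : 'I_j -> set (vecR R d)) (D : set (vecR R d)) :
  rational_pointed_fan Sigma -> monoidal_complex Sigma M ->
  (0 < j)%N -> (forall i, Sigma (C i)) -> Sigma D ->
  (* (i) *)
  @prime_p R d K Sigma M (\bigcap_(i in [set: 'I_j]) C i) =
    foldr (fun i acc => ideal_add (@prime_p R d K Sigma M (C i)) acc)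
          (@ideal_zero d K) (enum 'I_j)
  /\
  (* (ii) for the first t of the cones, 1 <= t <= j *)
  (forall t : nat, (0 < t <= j)%N ->
     ideal_add (@prime_p R d K Sigma M D)
               (\bigcap_(i in [set i : 'I_j | (i < t)%N]) @prime_p R d K Sigma M (C i)) =
     \bigcap_(i in [set i : 'I_j | (i < t)%N])
        ideal_add (@prime_p R d K Sigma M D) (@prime_p R d K Sigma M (C i))).
Proof.
move=> fan mc j_gt0 SC SD.
have prime_pE := @prime_p_vanishing R d K Sigma M fan mc.
split.
  have allE : [set: 'I_j] = [set` enum 'I_j] by apply/predeqP => i; rewrite /= mem_enum.
  have Scap : Sigma (\bigcap_(i in [set: 'I_j]) C i).
    by rewrite allE; apply: fan_bigcap_seq; rewrite // -size_eq0 size_enum_ord -lt0n.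
  rewrite prime_pE // (monoid_bigcap mc) //; last by exists (Ordinal j_gt0).
  by rewrite allE; apply/esym/foldr_ideal_add_vanishing => i; exact: prime_pE.
move=> t /andP[t_gt0 _].
have first_t_neq0 : [set i : 'I_j | (i < t)%N] !=set0 by exists (Ordinal j_gt0).
under eq_bigcapr => i _ do rewrite prime_pE //.
under [RHS]eq_bigcapr => i _ do rewrite !prime_pE // ideal_add_vanishing.
by rewrite prime_pE // !bigcap_vanishing // ideal_add_vanishing setI_bigcupr.
Qed.
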